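(* Let $r\ge4$. Every quasi product of $U_{2,3}$ and $M(r)$ has rank at most $2r-1$. In particular, no tensor product of $U_{2,3}$ and $M(r)$ exists.
   Context: Quasi product of matroids $M,N$: a matroid $P$ on $E(M)\times E(N)$ such that for every non-loop $e\in E(M)$, $x\mapsto(e,x)$ is an isomorphism $N\cong P|_{\{e\}\times E(N)}$; for every non-loop $f\in E(N)$, $x\mapsto(x,f)$ is an isomorphism $M\cong P|_{E(M)\times\{f\}}$; and rows/columns indexed by loops have rank $0$. A tensor product is a quasi product of rank $\mathrm{rk}(M)\mathrm{rk}(N)$. $U_{2,3}$ is the uniform matroid of rank $2$ on $3$ elements. Lindström matroid $M(r)$, $r\ge4$: let $A,B,C,D$ be pairwise disjoint sets of size $r-2$, $E_r=A\cup B\cup C\cup D$, $\mathcal{H}=\{A\cup B,A\cup C,A\cup D,B\cup C,B\cup D\}$; $M(r)$ is the rank-$r$ matroid on $E_r$ with $\mathrm{rk}(X)=\min(|X|,r-1)$ if $X\subseteq H$ for some $H\in\mathcal{H}$ and $\mathrm{rk}(X)=\min(|X|,r)$ otherwise (its proper nonempty cyclic flats are exactly the sets in $\mathcal{H}$, all hyperplanes). $M(4)$ is the Vámos matroid. *)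

From mathcomp Require Import all_boot.
Set Implicit Arguments. Unset Strict Implicit. Unset Printing Implicit Defensive.

Definition is_matroid (T : finType) (rk : {set T} -> nat) : Prop :=
  [/\ forall X : {set T}, rk X <= #|X|,
      forall X Y : {set T}, X \subset Y -> rk X <= rk Y &
      forall X Y : {set T}, rk (X :|: Y) + rk (X :&: Y) <= rk X + rk Y].

Definition is_loop (T : finType) (rk : {set T} -> nat) (e : T) : bool :=
  rk [set e] == 0.

Definition quasi_product (S T : finType) (rkM : {set S} -> nat)
  (rkN : {set T} -> nat) (rkP : {set S * T} -> nat) : Prop :=
  [/\ is_matroid rkP,
      (* for every non-loop e of M, x |-> (e,x) is an isomorphism N ~ P|{e} x E(N) *)
      forall e : S, ~~ is_loop rkM e ->
        forall X : {set T}, rkP [set (e, x) | x in X] = rkN X,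
      (* for every non-loop f of N, x |-> (x,f) is an isomorphism M ~ P|E(M) x {f} *)
      forall f : T, ~~ is_loop rkN f ->
        forall X : {set S}, rkP [set (x, f) | x in X] = rkM X,
      forall e : S, is_loop rkM e -> rkP [set (e, x) | x : T] = 0 &
      forall f : T, is_loop rkN f -> rkP [set (x, f) | x : S] = 0].

Definition tensor_product (S T : finType) (rkM : {set S} -> nat)
  (rkN : {set T} -> nat) (rkP : {set S * T} -> nat) : Prop :=
  quasi_product rkM rkN rkP /\ rkP setT = rkM setT * rkN setT.

Definition U23_rank (X : {set 'I_3}) : nat := minn #|X| 2.

(* Lindstrom matroid M(r): ground set E_r = 'I_4 * 'I_(r-2); block i of the
   ground set is [set (i, j) | j], with blocks 0,1,2,3 = A,B,C,D. *)
Definition lind_ground (r : nat) := ('I_4 * 'I_(r - 2))%type.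

Definition lind_block (r : nat) (i : 'I_4) : {set lind_ground r} :=
  [set x | x.1 == i].

(* The five hyperplanes A∪B, A∪C, A∪D, B∪C, B∪D: unions of blocks i, j with
   i < j and i <= 1. *)
Definition lind_hyperplanes (r : nat) : {set {set lind_ground r}} :=
  [set lind_block r ij.1 :|: lind_block r ij.2
     | ij in [set ij : 'I_4 * 'I_4 | (ij.1 < ij.2) && (ij.1 <= 1)]].

Definition lind_rank (r : nat) (X : {set lind_ground r}) : nat :=
  if [exists H in lind_hyperplanes r, X \subset H]
  then minn #|X| r.-1 else minn #|X| r.

From mathcomp Require Import all_boot zify.
Set Implicit Arguments. Unset Strict Implicit. Unset Printing Implicit Defensive.

(* Let [P] be a quasi product of [U_{2,3}] (rows 0, 1, 2) and [M(r)] with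
   blocks [A, B, C, D]; write [grid X0 X1 X2] for the union of the copies of
   [X0], [X1], [X2] in the three rows.  No element of either factor is a loop,
   so each row is a copy of [M(r)] and each column a copy of [U_{2,3}]; hence
   any two copies of a set [X] span the third.  Suppose [rk P >= 2r].  Then
   rows 0 and 2 (and rows 0 and 1) are skew, since the third row is spanned.
   From the hyperplanes [A :|: C], [A :|: D], [B :|: C], [B :|: D], [A :|: B]
   and submodularity one gets, for [x] = [A] or [B],
     rk (grid C (x :|: D) (A :|: B)) <= 2r - 1,
   while skewness and the spanning sets [A :|: B :|: C], [A :|: B :|: D],
   [C :|: D] give rk (grid C (A :|: B :|: D) (A :|: B)) >= 2r and
   rk (grid C D (A :|: B)) >= 2r - 1; submodularity for the two sets above
   with common part [grid C D (A :|: B)] is then violated. *)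

Section Matroid.
Variables (T : finType) (rk : {set T} -> nat).
Hypothesis rk_matroid : is_matroid rk.

Lemma rk_mono (X Y : {set T}) : X \subset Y -> rk X <= rk Y.
Proof. by case: rk_matroid => _ mono _; apply: mono. Qed.

Lemma rk_submod (A B C : {set T}) : C \subset A -> C \subset B ->
  rk (A :|: B) + rk C <= rk A + rk B.
Proof.
move=> CA CB; case: rk_matroid => _ _ /(_ A B).
have : rk C <= rk (A :&: B) by apply: rk_mono; rewrite subsetI CA CB.
lia.
Qed.

Lemma rk_subadd (A B : {set T}) : rk (A :|: B) <= rk A + rk B.
Proof. by have := @rk_submod A B set0; rewrite !sub0set => /(_ isT isT); lia. Qed.

Lemma spanned_sup (S0 S : {set T}) y : S0 \subset S ->
  rk (y |: S0) <= rk S0 -> rk (y |: S) <= rk S.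
Proof.
move=> S0S y_S0; have := @rk_submod S (y |: S0) S0 S0S (subsetUr _ _).
have : rk (y |: S) <= rk (S :|: (y |: S0)).
  by apply: rk_mono; rewrite setUCA setUS ?subsetUl.
lia.
Qed.

Lemma rk_setU_spanned (S Y : {set T}) :
  (forall y, y \in Y -> rk (y |: S) <= rk S) -> rk (S :|: Y) <= rk S.
Proof.
elim: {Y}_.+1 {-2}Y (ltnSn #|Y|) => // n IH Y cardY Y_spanned.
have [->|[y yY]] := set_0Vmem Y; first by rewrite setU0.
rewrite -(setD1K yY) setUCA.
have IHY : rk (S :|: (Y :\ y)) <= rk S.
  apply: IH => [|z /setD1P [_ zY]]; last exact: Y_spanned.
  by rewrite -ltnS (leq_trans _ cardY) // (cardsD1 y Y) yY.
apply: leq_trans IHY; apply: (spanned_sup (subsetUl _ _)); exact: Y_spanned.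
Qed.

Lemma skew_sub (A B A' B' : {set T}) : A' \subset A -> B' \subset B ->
  rk A + rk B <= rk (A :|: B) -> rk A' + rk B' <= rk (A' :|: B').
Proof.
move=> A'A B'B.
have := @rk_submod (A' :|: B') B B' (subsetUr _ _) B'B.
have := @rk_submod (A' :|: B) A A' (subsetUl _ _) A'A.
have -> : A' :|: B' :|: B = A' :|: B by rewrite -setUA (setUidPr B'B).
have -> : A' :|: B :|: A = A :|: B by rewrite setUAC (setUidPr A'A).
lia.
Qed.
End Matroid.

Definition blA : 'I_4 := @Ordinal 4 0 isT.
Definition blB : 'I_4 := @Ordinal 4 1 isT.
Definition blC : 'I_4 := @Ordinal 4 2 isT.
Definition blD : 'I_4 := @Ordinal 4 3 isT.

Section Lindstrom.
Variable r : nat.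
Local Notation lr := (lind_rank (r := r)).
Local Notation bl := (lind_block r).

Lemma lind_rank_le (X : {set lind_ground r}) : lr X <= r.
Proof. by rewrite /lind_rank; case: ifP => _; lia. Qed.

Lemma lind_rank_ge (X : {set lind_ground r}) : minn #|X| r.-1 <= lr X.
Proof. by rewrite /lind_rank; case: ifP => _; lia. Qed.

Lemma lind_rank0 : lr set0 = 0.
Proof. by rewrite /lind_rank cards0 !min0n; case: ifP. Qed.

Lemma card_block i : #|bl i| = r - 2.
Proof.
have -> : bl i = setX [set i] setT by apply/setP => -[x y]; rewrite !inE andbT.
by rewrite cardsX cards1 cardsT card_ord mul1n.
Qed.

Lemma card_block2 (i j : 'I_4) : i != j -> #|bl i :|: bl j| = 2 * (r - 2).
Proof.
move=> ij; rewrite cardsU !card_block.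
suff -> : bl i :&: bl j = set0 by rewrite cards0; lia.
apply/setP => x; rewrite !inE; apply/negP => /andP [/eqP-> /eqP eij].
by rewrite eij eqxx in ij.
Qed.

Lemma lind_rank_block i : r - 2 <= lr (bl i).
Proof. by apply: leq_trans (lind_rank_ge _); rewrite card_block; lia. Qed.

Lemma lind_rank_hyperplane (i j : 'I_4) : i < j -> i <= 1 ->
  lr (bl i :|: bl j) <= r - 1.
Proof.
move=> ij i_le1; rewrite /lind_rank.
have -> : [exists H in lind_hyperplanes r, bl i :|: bl j \subset H].
  apply/existsP; exists (bl i :|: bl j); rewrite subxx andbT.
  by apply/imsetP; exists (i, j); rewrite // inE ij i_le1.
lia.
Qed.

Lemma lind_rank_spanning (X : {set lind_ground r}) :
  (forall i j : 'I_4, i < j -> i <= 1 -> ~ X \subset bl i :|: bl j) ->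
  r <= #|X| -> r <= lr X.
Proof.
move=> nohyp cardX; rewrite /lind_rank; case: ifPn => [|_]; last by lia.
case/exists_inP => H /imsetP [[i j]]; rewrite inE /= => /andP [ij i_le1] ->.
by move/(nohyp i j ij i_le1).
Qed.

Hypothesis r_ge4 : 4 <= r.

Lemma lind_rank_block2 (i j : 'I_4) : i != j -> r - 1 <= lr (bl i :|: bl j).
Proof. by move=> ij; apply: leq_trans (lind_rank_ge _); rewrite card_block2 //; lia. Qed.

Lemma lind_rank_AB : lr (bl blA :|: bl blB) = r - 1.
Proof.
by apply/eqP; rewrite eqn_leq lind_rank_hyperplane // lind_rank_block2.
Qed.

(* Blocks are nonempty, so a hyperplane contains only its own two blocks. *)
Lemma block_sub_hyperplane (X : {set lind_ground r}) (i j k : 'I_4) :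
  bl k \subset X -> X \subset bl i :|: bl j -> k = i :> nat \/ k = j :> nat.
Proof.
move=> kX Xij; have z : 'I_(r - 2) by apply: (@Ordinal _ 0); lia.
have /(subsetP Xij) : (k, z) \in X by apply: (subsetP kX); rewrite inE.
by rewrite !inE /= => /orP [] /eqP ->; [left | right].
Qed.

(* No hyperplane contains three blocks, so any three blocks span [M(r)]. *)
Lemma lind_rank_three_blocks (X : {set lind_ground r}) (i j k : 'I_4) :
  i != j -> i != k -> j != k -> bl i :|: bl j :|: bl k \subset X -> r <= lr X.
Proof.
move=> ij ik jk; rewrite !subUset => /andP [/andP [iX jX] kX].
apply: lind_rank_spanning => [i' j' _ _ Xij|].
  move: ij ik jk; rewrite -!(inj_eq val_inj) /=.
  have := block_sub_hyperplane iX Xij; have := block_sub_hyperplane jX Xij.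
  by have := block_sub_hyperplane kX Xij; lia.
have /subset_leq_card : bl i :|: bl j \subset X by rewrite subUset iX.
by rewrite card_block2 //; lia.
Qed.

(* [C :|: D] is the one pair of blocks that is not a hyperplane. *)
Lemma lind_rank_CD (X : {set lind_ground r}) : bl blC :|: bl blD \subset X -> r <= lr X.
Proof.
move=> CDX; move: (CDX); rewrite subUset => /andP [CX DX].
apply: lind_rank_spanning => [i j _ i_le1 Xij|].
  have := block_sub_hyperplane CX Xij; have := block_sub_hyperplane DX Xij.
  by rewrite /=; lia.
by have /subset_leq_card := CDX; rewrite card_block2 //; lia.
Qed.

Lemma lind_rank_setT : lr setT = r.
Proof.
apply/eqP; rewrite eqn_leq lind_rank_le.
by apply: (@lind_rank_three_blocks _ blA blB blC); rewrite ?subsetT.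
Qed.
End Lindstrom.

Definition row0 : 'I_3 := @Ordinal 3 0 isT.
Definition row1 : 'I_3 := @Ordinal 3 1 isT.
Definition row2 : 'I_3 := @Ordinal 3 2 isT.

Section QuasiProduct.
Variables (r : nat) (r_ge4 : 4 <= r).
Local Notation G := (lind_ground r).
Local Notation lr := (lind_rank (r := r)).
Variable rk : {set 'I_3 * G} -> nat.
Hypothesis rk_qp : quasi_product U23_rank lr rk.

Lemma qp_matroid : is_matroid rk.
Proof. by case: rk_qp. Qed.

Definition row (i : 'I_3) (X : {set G}) : {set 'I_3 * G} := [set (i, x) | x in X].

Definition grid (X0 X1 X2 : {set G}) : {set 'I_3 * G} :=
  row row0 X0 :|: row row1 X1 :|: row row2 X2.

(* No element of [U_{2,3}] is a loop, so every row is a copy of [M(r)]. *)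
Lemma rk_row i (X : {set G}) : rk (row i X) = lr X.
Proof.
by case: rk_qp => _ row_iso _ _ _; rewrite row_iso // /is_loop /U23_rank cards1.
Qed.

(* No element of [M(r)] is a loop, so every column is a copy of [U_{2,3}]:
   two elements of a column span the whole column. *)
Lemma column_closure (i j k : 'I_3) f : i != j ->
  rk ((k, f) |: [set (i, f); (j, f)]) <= rk [set (i, f); (j, f)].
Proof.
move=> ij; case: rk_qp => _ _ rk_col _ _.
have f_nonloop : ~~ is_loop lr f.
  by rewrite /is_loop -lt0n (leq_trans _ (lind_rank_ge _)) // cards1; lia.
have col2 : [set (i, f); (j, f)] = [set (x, f) | x in [set i; j]].
  by rewrite imsetU1 imset_set1.
rewrite col2 -imsetU1 !rk_col // /U23_rank cards2 ij; lia.
Qed.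

Lemma rk_fill_row (i j k : 'I_3) (X : {set G}) (S : {set 'I_3 * G}) : i != j ->
  row i X \subset S -> row j X \subset S -> rk (S :|: row k X) <= rk S.
Proof.
move=> ij iS jS; apply: (rk_setU_spanned qp_matroid) => _ /imsetP [f fX ->].
apply: (spanned_sup qp_matroid _ (column_closure k f ij)).
by rewrite subUset !sub1set (subsetP iS) ?(subsetP jS) ?imset_f.
Qed.

Lemma gridU (X0 X1 X2 Y0 Y1 Y2 : {set G}) :
  grid X0 X1 X2 :|: grid Y0 Y1 Y2 = grid (X0 :|: Y0) (X1 :|: Y1) (X2 :|: Y2).
Proof. by rewrite /grid /row !imsetU setUACA [X in X :|: _]setUACA. Qed.

Lemma gridS (X0 X1 X2 Y0 Y1 Y2 : {set G}) :
  X0 \subset Y0 -> X1 \subset Y1 -> X2 \subset Y2 -> grid X0 X1 X2 \subset grid Y0 Y1 Y2.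
Proof. by move=> ? ? ?; rewrite /grid /row !setUSS // imsetS. Qed.

Lemma grid_row0 (X : {set G}) : grid X set0 set0 = row row0 X.
Proof. by rewrite /grid /row !imset0 !setU0. Qed.
Lemma grid_row1 (X : {set G}) : grid set0 X set0 = row row1 X.
Proof. by rewrite /grid /row !imset0 setU0 set0U. Qed.
Lemma grid_row2 (X : {set G}) : grid set0 set0 X = row row2 X.
Proof. by rewrite /grid /row !imset0 !set0U. Qed.

Lemma grid_fill0 (X0 X1 X2 X : {set G}) : X \subset X1 -> X \subset X2 ->
  rk (grid (X0 :|: X) X1 X2) <= rk (grid X0 X1 X2).
Proof.
move=> X1X X2X; rewrite -[X1]setU0 -[X2]setU0 -gridU grid_row0 !setU0.
apply: (@rk_fill_row row1 row2) => //.
  by rewrite -grid_row1 gridS ?sub0set.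
by rewrite -grid_row2 gridS ?sub0set.
Qed.

Lemma grid_fill1 (X0 X1 X2 X : {set G}) : X \subset X0 -> X \subset X2 ->
  rk (grid X0 (X1 :|: X) X2) <= rk (grid X0 X1 X2).
Proof.
move=> X0X X2X; rewrite -[X0]setU0 -[X2]setU0 -gridU grid_row1 !setU0.
apply: (@rk_fill_row row0 row2) => //.
  by rewrite -grid_row0 gridS ?sub0set.
by rewrite -grid_row2 gridS ?sub0set.
Qed.

Lemma grid_fill2 (X0 X1 X2 X : {set G}) : X \subset X0 -> X \subset X1 ->
  rk (grid X0 X1 (X2 :|: X)) <= rk (grid X0 X1 X2).
Proof.
move=> X0X X1X; rewrite -[X0]setU0 -[X1]setU0 -gridU grid_row2 !setU0.
apply: (@rk_fill_row row0 row1) => //.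
  by rewrite -grid_row0 gridS ?sub0set.
by rewrite -grid_row1 gridS ?sub0set.
Qed.

Lemma grid_setT : grid setT setT setT = setT.
Proof.
apply/eqP; rewrite eqEsubset subsetT; apply/subsetP => -[[[|[|[|n]]] lt3] f] _ //;
  rewrite !inE.
- by rewrite (_ : Ordinal lt3 = row0) ?imset_f //; apply: val_inj.
- by rewrite (_ : Ordinal lt3 = row1) ?imset_f ?orbT //; apply: val_inj.
- by rewrite (_ : Ordinal lt3 = row2) ?imset_f ?orbT //; apply: val_inj.
Qed.

Lemma rk_grid_le (X0 X1 X2 : {set G}) : rk (grid X0 X1 X2) <= lr X0 + lr X1 + lr X2.
Proof.
rewrite /grid -!(rk_row row0 X0) -(rk_row row1 X1) -(rk_row row2 X2).
apply: leq_trans (rk_subadd qp_matroid _ _) _.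
by rewrite leq_add2r (rk_subadd qp_matroid).
Qed.

Section TooLarge.
Hypothesis rk_large : 2 * r <= rk setT.

Lemma rows_skew (i j : 'I_3) (X Y : {set G}) :
  2 * r <= rk (row i setT :|: row j setT) -> lr X + lr Y <= rk (row i X :|: row j Y).
Proof.
move=> ij_large; rewrite -(rk_row i X) -(rk_row j Y).
apply: (skew_sub qp_matroid (A := row i setT) (B := row j setT));
  rewrite ?imsetS ?subsetT //.
by rewrite !rk_row; have := lind_rank_le (setT : {set G}); lia.
Qed.

(* Each row is spanned by the other two, so rows 0 and 2 (resp. 0 and 1)
   already have rank at least [2r] and are skew. *)
Lemma rows02_skew (X Y : {set G}) : lr X + lr Y <= rk (grid X set0 Y).
Proof.
have -> : grid X set0 Y = row row0 X :|: row row2 Y.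
  by rewrite -grid_row0 -grid_row2 gridU ?setU0 ?set0U.
apply: rows_skew; rewrite -grid_row0 -grid_row2 gridU ?setU0 ?set0U.
apply: leq_trans rk_large _; rewrite -grid_setT.
by rewrite -[X in rk (grid _ X _) <= _]set0U grid_fill1.
Qed.

Lemma rows01_skew (X Y : {set G}) : lr X + lr Y <= rk (grid X Y set0).
Proof.
have -> : grid X Y set0 = row row0 X :|: row row1 Y.
  by rewrite -grid_row0 -grid_row1 gridU ?setU0 ?set0U.
apply: rows_skew; rewrite -grid_row0 -grid_row1 gridU ?setU0 ?set0U.
apply: leq_trans rk_large _; rewrite -grid_setT.
by rewrite -[X in rk (grid _ _ X) <= _]set0U grid_fill2.
Qed.

Local Notation A := (lind_block r blA).
Local Notation B := (lind_block r blB).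
Local Notation C := (lind_block r blC).
Local Notation D := (lind_block r blD).

(* Upper bound: for [x] one of the blocks [A], [B], the hyperplanes [x :|: C],
   [x :|: D] together with the skewness of rows 0 and 2 force
   [rk (grid C (x :|: D) (A :|: B)) <= 2r - 1]. *)
Lemma grid_upper (x : {set G}) : x \subset A :|: B ->
  lr (x :|: C) <= r - 1 -> lr (x :|: D) <= r - 1 -> r - 2 <= lr x ->
  rk (grid C (x :|: D) (A :|: B)) <= 2 * r - 1.
Proof.
move=> xAB xC xD x_large.
have rk_xC : rk (grid (x :|: C) x (A :|: B)) <= 2 * r - 2.
  have := grid_fill1 set0 (subsetUl x C) xAB; rewrite set0U.
  have := rk_grid_le (x :|: C) set0 (A :|: B).
  by rewrite lind_rank0 (lind_rank_AB r_ge4); lia.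
have rk_xD : rk (grid x (x :|: D) (A :|: B)) <= 2 * r - 2.
  have := grid_fill0 set0 (subsetUl x D) xAB; rewrite set0U.
  have := rk_grid_le set0 (x :|: D) (A :|: B).
  by rewrite lind_rank0 (lind_rank_AB r_ge4); lia.
have := rk_submod qp_matroid
  (gridS (subsetUl x C) (sub0set x) (subxx (A :|: B)))
  (gridS (subxx x) (sub0set (x :|: D)) (subxx (A :|: B))).
have : rk (grid C (x :|: D) (A :|: B)) <=
       rk (grid (x :|: C) x (A :|: B) :|: grid x (x :|: D) (A :|: B)).
  by rewrite gridU setUid (rk_mono qp_matroid) ?gridS // ?subsetUr // setUAC subsetUr.
by have := rows02_skew x (A :|: B); rewrite (lind_rank_AB r_ge4); lia.
Qed.

(* Lower bound: rows 0 and 1 are skew, while [C :|: (A :|: B)] and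
   [A :|: B :|: D] span [M(r)]; filling row 0 with [A :|: B] is free. *)
Lemma grid_lower_ABD : 2 * r <= rk (grid C (A :|: B :|: D) (A :|: B)).
Proof.
have ABD : A :|: B \subset A :|: B :|: D by rewrite subsetUl.
apply: leq_trans (grid_fill0 C ABD (subxx _)).
apply: leq_trans (rk_mono qp_matroid (gridS (subxx _) (subxx _) (sub0set _))).
apply: leq_trans (rows01_skew _ _); rewrite mul2n -addnn; apply: leq_add.
  by apply: (lind_rank_three_blocks r_ge4 (i := blA) (j := blB) (k := blC));
    rewrite // setUC.
by apply: (lind_rank_three_blocks r_ge4 (i := blA) (j := blB) (k := blD)).
Qed.

(* Lower bound: [C :|: D] spans [M(r)], so [grid C D setT] has rank [2r];
   replacing row 2 by the hyperplane [A :|: B] loses at most one. *)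
Lemma grid_lower_CD : 2 * r - 1 <= rk (grid C D (A :|: B)).
Proof.
have CDE : 2 * r <= rk (grid C D setT).
  apply: leq_trans (grid_fill0 C (subxx D) (subsetT D)).
  apply: leq_trans (rk_mono qp_matroid (gridS (subxx _) (sub0set _) (subxx _))).
  apply: leq_trans (rows02_skew _ _); rewrite (lind_rank_setT r_ge4).
  by have := lind_rank_CD r_ge4 (subxx (C :|: D)); lia.
have := rk_submod qp_matroid (gridS (sub0set C) (sub0set D) (subxx (A :|: B)))
                              (gridS (subxx set0) (subxx set0) (subsetT (A :|: B))).
rewrite gridU !setU0 setUT !grid_row2 !rk_row.
by rewrite (lind_rank_AB r_ge4) (lind_rank_setT r_ge4); lia.
Qed.

(* Submodularity for [grid C (A :|: D) (A :|: B)] and [grid C (B :|: D) (A :|: B)],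
   whose union is [grid C (A :|: B :|: D) (A :|: B)], contradicts the bounds. *)
Lemma quasi_product_not_large : False.
Proof.
have := rk_submod qp_matroid
  (gridS (subxx C) (subsetUr A D) (subxx (A :|: B)))
  (gridS (subxx C) (subsetUr B D) (subxx (A :|: B))).
rewrite gridU !setUid -setUUl.
have := grid_upper (subsetUl A B) (@lind_rank_hyperplane r blA blC isT isT)
  (@lind_rank_hyperplane r blA blD isT isT) (lind_rank_block _ _).
have := grid_upper (subsetUr A B) (@lind_rank_hyperplane r blB blC isT isT)
  (@lind_rank_hyperplane r blB blD isT isT) (lind_rank_block _ _).
by have := grid_lower_ABD; have := grid_lower_CD; lia.
Qed.
End TooLarge.
End QuasiProduct.

(* Proposition 2.9: a quasi product of [U_{2,3}] and [M(r)] has rank at most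
   [2r - 1], while a tensor product would have rank [2 * r]. *)
Theorem proposition2p9 (r : nat) (hr : 4 <= r) :
  (forall rkP : {set ('I_3 * lind_ground r)} -> nat,
     quasi_product U23_rank (lind_rank (r := r)) rkP -> rkP setT <= 2 * r - 1)
  /\ ~ (exists rkP : {set ('I_3 * lind_ground r)} -> nat,
          tensor_product U23_rank (lind_rank (r := r)) rkP).
Proof.
have rank_bound : forall rkP : {set ('I_3 * lind_ground r)} -> nat,
    quasi_product U23_rank (lind_rank (r := r)) rkP -> rkP setT <= 2 * r - 1.
  move=> rkP qp; rewrite leqNgt; apply/negP => large.
  by apply: (quasi_product_not_large hr qp); lia.
split=> [// | [rkP [qp tensor]]].
have := rank_bound rkP qp.
by rewrite tensor /U23_rank cardsT card_ord (lind_rank_setT hr); lia.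
Qed.
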